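(* Let $(F,G)\in\mathcal H_{\mathbf d}[q\,;\,s]$ and $D=\max_i d_i$. For any $r>0$, $\mathcal U_{\mathbb S}\big(S(F,G),D^{-1/2}r\big)\subseteq\mathsf{Approx}(F,G,r)$.
   Context: $\mathcal H_{\mathbf d}[q\,;\,s]$: pairs $(F,G)$, $F=(f_1,\dots,f_q)$, $G=(g_1,\dots,g_s)$, of real homogeneous polynomials in $X_0,\dots,X_n$ of degrees $d_1,\dots,d_{q+s}$; each polynomial $h$ has the Weyl norm $\|h\|$ where $\|h\|^2=\sum_{|a|=d}\binom da^{-1}h_a^2$ ($h_a$ coefficients, $\binom da$ multinomial). $S(F,G)=\{x\in\mathbb S^n: f_i(x)=0\ \forall i,\ g_j(x)\geq0\ \forall j\}$. For $A\subseteq\mathbb S^n$, $\mathcal U_{\mathbb S}(A,r)=\{x\in\mathbb S^n: d_{\mathbb S}(x,A)<r\}$ with $d_{\mathbb S}$ the geodesic distance. $\mathsf{Approx}(F,G,r)=\{x\in\mathbb S^n:\ |f(x)|<\|f\|r\ \forall f\in F,\ g(x)>-\|g\|r\ \forall g\in G\}$. *)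

From Stdlib Require Import Reals.
From mathcomp Require Import all_boot all_algebra.
From mathcomp Require Import Rstruct.
From mathcomp Require Import mpoly.

Set Implicit Arguments.
Unset Strict Implicit.
Unset Printing Implicit Defensive.

Import GRing.Theory.
Local Open Scope ring_scope.

Definition point (n : nat) := 'I_n.+1 -> R.

Definition sphere (n : nat) (x : point n) : Prop :=
  (\sum_(i < n.+1) x i ^+ 2 = 1)%R.

Definition inner (n : nat) (x y : point n) : R := \sum_(i < n.+1) x i * y i.

Definition dS (n : nat) (x y : point n) : R := acos (inner x y).

(* U_S(A, r) = { x in S^n | d_S(x, A) < r },  d_S(x,A) = inf_{a in A} d_S(x,a).
   Since the infimum (+oo for empty A) is < r iff some a in A has d_S(x,a) < r,
   we unfold it to the existential. *)
Definition U_S (n : nat) (A : point n -> Prop) (r : R) (x : point n) : Prop :=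
  sphere x /\ exists a, A a /\ (dS x a < r)%R.

Definition multinomial (n : nat) (a : 'X_{1..n}) : nat :=
  ((mdeg a)`! %/ \prod_(i < n) (a i)`!)%N.

(* Weyl norm of a homogeneous polynomial h of degree d:
   ||h||^2 = sum_{|a| = d} binom(d,a)^{-1} h_a^2
   (the coefficients outside the support vanish, and for h d-homogeneous
    every monomial of the support has degree d). *)
Definition weyl_norm (n : nat) (h : {mpoly R[n]}) : R :=
  sqrt (\sum_(a <- msupp h) (h@_a) ^+ 2 / (multinomial a)%:R).

Definition SFG (n q s : nat) (F : 'I_q -> {mpoly R[n.+1]})
  (G : 'I_s -> {mpoly R[n.+1]}) (x : point n) : Prop :=
  sphere x /\ (forall i, (F i).@[x] = 0) /\ (forall j, (0 <= (G j).@[x])%R).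

Definition Approx (n q s : nat) (F : 'I_q -> {mpoly R[n.+1]})
  (G : 'I_s -> {mpoly R[n.+1]}) (r : R) (x : point n) : Prop :=
  sphere x /\
  (forall i, (Rabs ((F i).@[x]) < weyl_norm (F i) * r)%R) /\
  (forall j, ((G j).@[x] > - (weyl_norm (G j) * r))%R).

(* Write a d-homogeneous f as a sum over all words w in {0..n}^d,
   f(x) = sum_w c_w x_(w_1) ... x_(w_d), where c_w = f_alpha / binom(d, alpha)
   for the letter count alpha of w; then sum_w c_w^2 is exactly the squared Weyl norm.
   Cauchy-Schwarz gives |f(x) - f(a)|^2 <= ||f||^2 sum_w (x^w - a^w)^2
   = ||f||^2 (2 - 2 <x,a>^d) on the unit sphere, and 1 - c^d <= d (1 - c),
   2 (1 - cos t) <= t^2 bound this by ||f||^2 d d_S(x,a)^2.  So if a lies in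
   S(F,G) and d_S(x,a) < r / sqrt D, every f in F and G moves by less than
   ||f|| r from its value at a. *)

From Stdlib Require Import Reals Lra.
From mathcomp Require Import all_boot all_order all_algebra.
From mathcomp Require Import Rstruct mpoly.

Local Open Scope R_scope.

Lemma sin_sqr_le (t : R) : sin t * sin t <= t * t.
Proof.
wlog t_ge0 : t / 0 <= t.
  move=> le_t; have [/le_t //|t_lt0] := Rle_lt_dec 0 t.
  by have := le_t (- t); rewrite sin_neg; nra.
have [s_lb s_ub] := SIN_bound t.
have sin_le : sin t <= t.
  by have [->|t_gt0] := Req_dec t 0; [rewrite sin_0; lra | have := sin_lt_x t; lra].
have sin_ge : - t <= sin t.
  have [t_ge1|t_lt1] := Rle_lt_dec 1 t; first lra.
  have t_le_PI : t <= PI by have := PI2_1; lra.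
  have := sin_ge_0 t t_ge0 t_le_PI; lra.
nra.
Qed.

Lemma one_sub_cos_le (t : R) : 1 - cos t <= t * t / 2.
Proof.
have -> : t = 2 * (t / 2) by field.
rewrite cos_2a_sin; have := sin_sqr_le (t / 2); lra.
Qed.

From mathcomp.algebra_tactics Require Import ring lra.

Set Implicit Arguments.
Unset Strict Implicit.
Unset Printing Implicit Defensive.
Import Order.TTheory GRing.Theory Num.Theory.
Local Open Scope ring_scope.

Section Words.
Variables (K : numFieldType) (m : nat).
Implicit Types (w : seq 'I_m) (a : 'X_{1..m}) (y : 'I_m -> K).

Fixpoint words (d : nat) : seq (seq 'I_m) :=
  if d is d'.+1 then [seq i :: w | i <- enum 'I_m, w <- words d'] else [:: [::]].

Definition word_mnm w : 'X_{1..m} := [multinom count_mem i w | i < m].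

Lemma word_mnm_nil : word_mnm [::] = 0%MM.
Proof. by apply/mnmP => j; rewrite !mnmE. Qed.

Lemma word_mnm_cons i w : word_mnm (i :: w) = (U_(i) + word_mnm w)%MM.
Proof. by apply/mnmP => j; rewrite mnmDE !mnmE. Qed.

Lemma addU_subm a i : (0 < a i)%N -> (U_(i) + (a - U_(i)))%MM = a.
Proof.
move=> ai_gt0; rewrite addmC submK //.
by apply/mnm_lepP => j; rewrite mnm1E; case: eqP => [<-|].
Qed.

Definition nwords d a : nat := (\sum_(w <- words d) (word_mnm w == a))%N.

Lemma nwordsS d a :
  nwords d.+1 a = (\sum_(i < m | 0 < a i) nwords d (a - U_(i))%MM)%N.
Proof.
rewrite /nwords /= big_allpairs_dep big_enum [RHS]big_mkcond /=.
apply: eq_bigr => i _.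
have [ai_gt0|] := ltnP 0 (a i).
  apply: eq_bigr => w _.
  by rewrite word_mnm_cons -[in LHS](addU_subm ai_gt0) (inj_eq (@addmI _ _)).
rewrite leqn0 => /eqP ai0; rewrite big1 // => w _.
case: eqP => // /(congr1 (fun b : 'X_{1..m} => b i)).
by rewrite word_mnm_cons mnmDE mnm1E eqxx ai0.
Qed.

Lemma nwords_fact d a : mdeg a = d -> (nwords d a * \prod_(i < m) (a i)`! = d`!)%N.
Proof.
elim: d a => [|d IH] a deg_a.
  move/eqP: deg_a; rewrite mdeg_eq0 => /eqP ->.
  by rewrite /nwords big_seq1 word_mnm_nil eqxx big1 // => i _; rewrite mnm0E.
rewrite nwordsS big_distrl /= (eq_bigr (fun i => d`! * a i)%N); last first.
  move=> i ai_gt0.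
  have deg_sub : mdeg (a - U_(i))%MM = d.
    by move: deg_a; rewrite -{1}(addU_subm ai_gt0) mdegD mdeg1 add1n => -[].
  rewrite -(IH _ deg_sub) -mulnA; congr (_ * _)%N.
  rewrite (bigD1 i) // [in RHS](bigD1 i) // mnmBE mnm1E eqxx.
  under [in RHS]eq_bigr => j ji do rewrite mnmBE mnm1E eq_sym (negPf ji) subn0.
  by case: (a i) ai_gt0 => // k _; rewrite factS subn1 [RHS]mulnC mulnA.
rewrite factS -deg_a mdegE mulnC big_distrr /=.
by apply: big_rmcond => i; rewrite -leqNgt leqn0 => /eqP ->; rewrite muln0.
Qed.

Lemma multinomialE a : multinomial a = nwords (mdeg a) a.
Proof.
have := nwords_fact (erefl (mdeg a)); rewrite /multinomial => <-.
by rewrite mulnK // prodn_gt0 // => i; rewrite fact_gt0.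
Qed.

Lemma multinomial_gt0 a : (0 < multinomial a)%N.
Proof.
have := fact_gt0 (mdeg a); rewrite -(nwords_fact (erefl (mdeg a))) -multinomialE.
by rewrite muln_gt0 => /andP[].
Qed.

Lemma sum_words_prod y d :
  \sum_(w <- words d) \prod_(k <- w) y k = (\sum_i y i) ^+ d.
Proof.
elim: d => [|d IH]; first by rewrite big_seq1 big_nil.
rewrite /= big_allpairs_dep big_enum exprS mulr_suml /=; apply: eq_bigr => i _.
by rewrite -IH mulr_sumr; apply: eq_bigr => w _; rewrite big_cons.
Qed.

Lemma prod_word_mnm y w : \prod_(k <- w) y k = \prod_i y i ^+ word_mnm w i.
Proof.
elim: w => [|i w IH].
  by rewrite big_nil word_mnm_nil big1 // => j _; rewrite mnm0E.
rewrite big_cons IH word_mnm_cons.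
under [RHS]eq_bigr => j _ do rewrite mnmDE exprD.
rewrite big_split /=; congr (_ * _).
rewrite (bigD1 i) //= mnm1E eqxx big1 ?mulr1 // => j /negPf ji.
by rewrite mnm1E eq_sym ji.
Qed.

Lemma sum_words_by_mnm (S : seq 'X_{1..m}) (h : 'X_{1..m} -> K) d :
  uniq S -> (forall a, a \notin S -> h a = 0) ->
  \sum_(w <- words d) h (word_mnm w) = \sum_(a <- S) (nwords d a)%:R * h a.
Proof.
move=> uniq_S h_out.
transitivity (\sum_(w <- words d) \sum_(a <- S | word_mnm w == a) h a).
  apply: eq_bigr => w _; have [w_in|w_out] := boolP (word_mnm w \in S).
    rewrite -big_filter (@eq_filter _ _ (pred1 (word_mnm w))) => [|a]; last exact: eq_sym.
    by rewrite filter_pred1_uniq // big_seq1.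
  rewrite h_out // big1_seq // => a /andP[/eqP <-].
  by rewrite (negPf w_out).
under eq_bigr do rewrite big_mkcond; rewrite exchange_big /=; apply: eq_bigr => a _.
rewrite /nwords natr_sum mulr_suml; apply: eq_bigr => w _.
by case: eqP; rewrite ?mul1r ?mul0r.
Qed.

Definition word_coef d (f : {mpoly K[m]}) w : K :=
  f@_(word_mnm w) / (nwords d (word_mnm w))%:R.

Lemma nwords_homog d (f : {mpoly K[m]}) a :
  f \is d.-homog -> a \in msupp f -> nwords d a = multinomial a.
Proof. by move=> f_homog /(dhomog_mf f_homog) <-; rewrite multinomialE. Qed.

Lemma meval_words d (f : {mpoly K[m]}) (x : 'I_m -> K) : f \is d.-homog ->
  f.@[x] = \sum_(w <- words d) word_coef d f w * \prod_(k <- w) x k.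
Proof.
move=> f_homog; under eq_bigr do rewrite prod_word_mnm.
pose h a := f@_a / (nwords d a)%:R * \prod_i x i ^+ a i.
rewrite (@sum_words_by_mnm (msupp f) h d (msupp_uniq f)) => [|a]; last first.
  by rewrite /h -mcoeff_eq0 => /eqP ->; rewrite !mul0r.
rewrite mevalE; apply: eq_big_seq => a a_supp; rewrite /h (nwords_homog f_homog a_supp).
by rewrite mulrA mulrCA divff ?mulr1 // pnatr_eq0 -lt0n multinomial_gt0.
Qed.

Lemma sum_word_coef_sqr d (f : {mpoly K[m]}) : f \is d.-homog ->
  \sum_(w <- words d) word_coef d f w ^+ 2 =
  \sum_(a <- msupp f) f@_a ^+ 2 / (multinomial a)%:R.
Proof.
move=> f_homog; pose h a := (f@_a / (nwords d a)%:R) ^+ 2.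
rewrite (@sum_words_by_mnm (msupp f) h d (msupp_uniq f)) => [|a]; last first.
  by rewrite /h -mcoeff_eq0 => /eqP ->; rewrite mul0r expr0n.
apply: eq_big_seq => a a_supp; rewrite /h (nwords_homog f_homog a_supp).
by field; rewrite pnatr_eq0 -lt0n multinomial_gt0.
Qed.

Lemma sum_words_sub_prod_sqr d (x a : 'I_m -> K) :
  \sum_(w <- words d) (\prod_(k <- w) x k - \prod_(k <- w) a k) ^+ 2 =
  (\sum_i x i ^+ 2) ^+ d + (\sum_i a i ^+ 2) ^+ d - 2 * (\sum_i x i * a i) ^+ d.
Proof.
rewrite -!sum_words_prod mulr_sumr -big_split -sumrB /=.
by apply: eq_bigr => w _; rewrite !big_split /=; ring.
Qed.

End Words.

Lemma cauchy_schwarz_step (F : realFieldType) (u v A B C : F) :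
  0 <= A -> 0 <= B -> C ^+ 2 <= A * B ->
  (u * v + C) ^+ 2 <= (u ^+ 2 + A) * (v ^+ 2 + B).
Proof.
move=> A_ge0 B_ge0 C_le.
suff cross : 2 * C * u * v <= A * v ^+ 2 + B * u ^+ 2 by nra.
have [A0|A_neq0] := eqVneq A 0.
  have -> : C = 0 by move: C_le; rewrite A0 mul0r; nra.
  by rewrite A0; nra.
have A_gt0 : 0 < A by rewrite lt_def A_neq0.
(* A (A v^2 + B u^2 - 2 C u v) = (A v - C u)^2 + (A B - C^2) u^2 *)
have := sqr_ge0 (A * v - C * u); have := sqr_ge0 u; nra.
Qed.

Lemma cauchy_schwarz_seq (F : realFieldType) (T : Type) (s : seq T) (u v : T -> F) :
  (\sum_(t <- s) u t * v t) ^+ 2 <= (\sum_(t <- s) u t ^+ 2) * (\sum_(t <- s) v t ^+ 2).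
Proof.
elim: s => [|t s IH]; first by rewrite !big_nil expr0n mul0r.
rewrite !big_cons; apply: cauchy_schwarz_step => //;
  by apply: sumr_ge0 => i _; apply: sqr_ge0.
Qed.

Lemma one_sub_expr_le (F : realFieldType) (c : F) d :
  -1 <= c <= 1 -> 1 - c ^+ d <= d%:R * (1 - c).
Proof.
move=> /andP[c_ge c_le]; elim: d => [|d IH]; first by rewrite expr0 subrr mul0r.
have cd_le1 : c ^+ d <= 1.
  by rewrite (le_trans (ler_norm _)) // normrX exprn_ile1 // ler_norml c_ge.
rewrite exprS -natr1 mulrDl mul1r; nra.
Qed.

Lemma two_sub_two_le_acos_sqr (c : R) : -1 <= c <= 1 -> 2 - 2 * c <= acos c ^+ 2.
Proof.
move=> /andP[/RleP c_ge /RleP c_le].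
have := one_sub_cos_le (acos c); rewrite cos_acos; last by split.
by move/RleP; rewrite RminusE RdivE RmultE R1E IZRposE INRE /= expr2; lra.
Qed.

Lemma dS_ge0 n (x a : point n) : 0 <= dS x a.
Proof. by apply/RleP; case: (acos_bound (inner x a)). Qed.

Lemma weyl_norm_ge0 m (f : {mpoly R[m]}) : 0 <= weyl_norm f.
Proof. by rewrite /weyl_norm RsqrtE sqrtr_ge0. Qed.

Lemma weyl_norm_sqr m (f : {mpoly R[m]}) :
  weyl_norm f ^+ 2 = \sum_(a <- msupp f) f@_a ^+ 2 / (multinomial a)%:R.
Proof.
rewrite /weyl_norm RsqrtE sqr_sqrtr //.
by apply: sumr_ge0 => a _; rewrite divr_ge0 ?sqr_ge0 ?ler0n.
Qed.

Lemma weyl_norm_gt0 m (f : {mpoly R[m]}) : f != 0 -> 0 < weyl_norm f.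
Proof.
rewrite -msupp_eq0 => supp_f.
have weight_ge0 a : 0 <= f@_a ^+ 2 / (multinomial a)%:R.
  by rewrite divr_ge0 ?sqr_ge0 ?ler0n.
rewrite /weyl_norm RsqrtE sqrtr_gt0 lt_def sumr_ge0 // andbT psumr_neq0 //.
move: supp_f; case supp_f: (msupp f) => [|a s] // _.
apply/hasP; exists a; first exact: mem_head.
apply: divr_gt0; last by rewrite ltr0n multinomial_gt0.
by rewrite exprn_even_gt0 //= mcoeff_eq0 negbK supp_f mem_head.
Qed.

Lemma sqr_meval_sub_le m d (f : {mpoly R[m]}) (x a : 'I_m -> R) :
  f \is d.-homog -> \sum_i x i ^+ 2 = 1 -> \sum_i a i ^+ 2 = 1 ->
  (f.@[x] - f.@[a]) ^+ 2 <= weyl_norm f ^+ 2 * (2 - 2 * (\sum_i x i * a i) ^+ d).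
Proof.
move=> f_homog x_unit a_unit.
rewrite (meval_words x f_homog) (meval_words a f_homog) -sumrB.
under eq_bigr do rewrite -mulrBr.
apply: le_trans (cauchy_schwarz_seq _ _ _) _.
by rewrite weyl_norm_sqr -(sum_word_coef_sqr f_homog) sum_words_sub_prod_sqr
  x_unit a_unit !expr1n.
Qed.

Lemma inner_sphere_bounds n (x a : point n) :
  sphere x -> sphere a -> -1 <= inner x a <= 1.
Proof.
move=> x_unit a_unit; have := cauchy_schwarz_seq (index_enum 'I_n.+1) x a.
rewrite x_unit a_unit mulr1 -/(inner x a) => cs.
apply/andP; split; nra.
Qed.

Lemma meval_sub_le n d (f : {mpoly R[n.+1]}) (x a : point n) :
  f \is d.-homog -> sphere x -> sphere a ->
  `|f.@[x] - f.@[a]| <= weyl_norm f * (sqrt d%:R * dS x a).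
Proof.
move=> f_homog x_unit a_unit.
rewrite -ler_sqr ?nnegrE ?normr_ge0 //; last first.
  by rewrite !mulr_ge0 ?weyl_norm_ge0 ?dS_ge0 // RsqrtE sqrtr_ge0.
rewrite real_normK ?num_real // !exprMn RsqrtE sqr_sqrtr ?ler0n //.
apply: le_trans (sqr_meval_sub_le f_homog x_unit a_unit) _.
rewrite ler_wpM2l ?sqr_ge0 // -/(inner x a).
have c_bounds := inner_sphere_bounds x_unit a_unit.
have := two_sub_two_le_acos_sqr c_bounds; have := one_sub_expr_le d c_bounds.
by rewrite -/(dS x a); have := ler0n R d; nra.
Qed.

Lemma meval_sub_lt n d D (f : {mpoly R[n.+1]}) (x a : point n) (r : R) :
  f \is d.-homog -> f != 0 -> sphere x -> sphere a -> (d <= D)%N ->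
  dS x a * sqrt D%:R < r -> `|f.@[x] - f.@[a]| < weyl_norm f * r.
Proof.
move=> f_homog f_neq0 x_unit a_unit d_le close.
apply: le_lt_trans (meval_sub_le f_homog x_unit a_unit) _.
rewrite ltr_pM2l ?weyl_norm_gt0 // mulrC; apply: le_lt_trans close.
by rewrite ler_wpM2l ?dS_ge0 // !RsqrtE ler_sqrt ?ler0n // ler_nat.
Qed.

Theorem proposition4p17 (n q s : nat) (d : 'I_(q + s) -> nat)
  (F : 'I_q -> {mpoly R[n.+1]}) (G : 'I_s -> {mpoly R[n.+1]})
  (hdpos : forall k, (0 < d k)%N)
  (hF : forall i, F i \is (d (lshift s i)).-homog)
  (hG : forall j, G j \is (d (rshift q j)).-homog)
  (hFnz : forall i, F i != 0) (hGnz : forall j, G j != 0)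
  (r : R) (hr : 0 < r) :
  let D := (\max_(k < q + s) d k)%N in
  forall x : point n,
    U_S (SFG F G) (r / sqrt (D%:R)) x -> Approx F G r x.
Proof.
move=> D x [x_unit [a [[a_unit [Fa0 Ga_ge0]] near_a]]].
have d_le k : (d k <= D)%N by exact: leq_bigmax.
have close (k : 'I_(q + s)) : dS x a * sqrt D%:R < r.
  by rewrite -ltr_pdivlMr // RsqrtE sqrtr_gt0 ltr0n (leq_trans (hdpos k) (d_le k)).
split=> //; split=> [i|j].
  have := meval_sub_lt (hF i) (hFnz i) x_unit a_unit (d_le _) (close (lshift s i)).
  by rewrite Fa0 subr0.
have := meval_sub_lt (hG j) (hGnz j) x_unit a_unit (d_le _) (close (rshift q j)).
rewrite ltr_norml => /andP[lt_lb _].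
by apply: lt_le_trans lt_lb _; rewrite gerBl.
Qed.
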